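(* Let $X\subset\mathbb{R}^n$ be a subanalytic set and $f\in\mathcal{C}(X)$. Then there exists a subanalytic function $h:X\to(0,+\infty)$ such that $|f(x)|\le h(x)$ for all $x\in X$.
   Context: ''Subanalytic'' means globally subanalytic: definable in the expansion of the real field by all restricted analytic functions (functions $\mathbb{R}^k\to\mathbb{R}$ agreeing on $[-1,1]^k$ with a function analytic on a neighbourhood of $[-1,1]^k$ and vanishing outside it); a function is subanalytic if its graph is; $\log$ is not subanalytic. $\mathcal{C}(X)$ is the $\mathbb{R}$-algebra of real-valued functions on $X$ generated by all subanalytic functions $X\to\mathbb{R}$ and all functions $x\mapsto\log g(x)$ with $g:X\to(0,+\infty)$ subanalytic. *)

From HB Require Import structures.
From mathcomp Require Import all_boot all_order all_algebra.
From mathcomp Require Import all_classical all_reals all_analysis.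
Set Implicit Arguments. Unset Strict Implicit. Unset Printing Implicit Defensive.
Import Order.TTheory GRing.Theory Num.Theory.
Import numFieldNormedType.Exports.
Local Open Scope classical_set_scope.
Local Open Scope ring_scope.

Section Subanalytic.
Variable R : realType.

Definition restrict k (x : 'I_k.+1 -> R) : 'I_k -> R :=
  fun j => x (lift ord_max j).

Definition ext n (x : 'I_n -> R) (t : R) : 'I_n.+1 -> R :=
  fun i => match unlift ord_max i with Some j => x j | None => t end.

Definition graph k (f : ('I_k -> R) -> R) : set ('I_k.+1 -> R) :=
  [set x | x ord_max = f (restrict x)].

Definition boxsum k (c : ('I_k -> nat) -> R) (a y : 'I_k -> R) (N : nat) : R :=
  \sum_(al : {ffun 'I_k -> 'I_N.+1})
     c (fun i => nat_of_ord (al i)) * \prod_(i < k) (y i - a i) ^+ (al i).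

Definition absboxsum k (c : ('I_k -> nat) -> R) (a y : 'I_k -> R) (N : nat) : R :=
  \sum_(al : {ffun 'I_k -> 'I_N.+1})
     `|c (fun i => nat_of_ord (al i))| * \prod_(i < k) `|y i - a i| ^+ (al i).

(* g is real analytic at a: locally equal to an (absolutely) convergent power series *)
Definition analytic_at k (g : ('I_k -> R) -> R) (a : 'I_k -> R) : Prop :=
  exists r : R, 0 < r /\ exists c : ('I_k -> nat) -> R,
    forall y : 'I_k -> R, (forall i, `|y i - a i| < r) ->
      (exists M : R, forall N, absboxsum c a y N <= M) /\
      (boxsum c a y) @ \oo --> g y.

Definition restricted_analytic k (f : ('I_k -> R) -> R) : Prop :=
  exists g : ('I_k -> R) -> R,
    (exists e : R, 0 < e /\
       forall a : 'I_k -> R, (forall i, `|a i| < 1 + e) -> analytic_at g a) /\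
    (forall x, (forall i, `|x i| <= 1) -> f x = g x) /\
    (forall x, ~ (forall i, `|x i| <= 1) -> f x = 0).

(* Sets definable (with parameters) in R_an = (R,<,+,*, restricted analytic
   functions): the smallest family of subsets of the R^n containing the basic
   relations and closed under boolean operations, substitution of variables
   (products, diagonals, permutations) and projection. *)
Inductive definable : forall n, set ('I_n -> R) -> Prop :=
| def_lt : definable [set x : 'I_2 -> R | x ord0 < x ord_max]
| def_add : definable (graph (fun y : 'I_2 -> R => y ord0 + y ord_max))
| def_mul : definable (graph (fun y : 'I_2 -> R => y ord0 * y ord_max))
| def_const (c : R) : definable (graph (fun _ : 'I_0 -> R => c))
| def_ran k (f : ('I_k -> R) -> R) : restricted_analytic f -> definable (graph f)
| def_compl n (A : set ('I_n -> R)) : definable A -> definable (~` A)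
| def_union n (A B : set ('I_n -> R)) :
    definable A -> definable B -> definable (A `|` B)
| def_subst m n (s : 'I_m -> 'I_n) (A : set ('I_m -> R)) :
    definable A -> definable [set x : 'I_n -> R | A (x \o s)]
| def_proj n (A : set ('I_n.+1 -> R)) :
    definable A -> definable [set x : 'I_n -> R | exists t, A (ext x t)].

Definition subanalytic n (X : set ('I_n -> R)) : Prop := definable X.

(* f : X -> R is subanalytic (values of f outside X are irrelevant) *)
Definition subanalytic_fun n (X : set ('I_n -> R)) (f : ('I_n -> R) -> R) : Prop :=
  definable [set x : 'I_n.+1 -> R | X (restrict x) /\ x ord_max = f (restrict x)].

(* C(X): the R-algebra of functions on X generated by subanalytic functions
   and logs of positive subanalytic functions (functions compared on X). *)
Inductive inC n (X : set ('I_n -> R)) : (('I_n -> R) -> R) -> Prop :=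
| C_sub f : subanalytic_fun X f -> inC X f
| C_log g : subanalytic_fun X g -> (forall x, X x -> 0 < g x) ->
    inC X (fun x => ln (g x))
| C_add f g : inC X f -> inC X g -> inC X (fun x => f x + g x)
| C_mul f g : inC X f -> inC X g -> inC X (fun x => f x * g x)
| C_scale (l : R) f : inC X f -> inC X (fun x => l * f x)
| C_ext f g : inC X f -> (forall x, X x -> f x = g x) -> inC X g.

End Subanalytic.

(* Every generator of C(X) is dominated by a positive subanalytic function:
   a subanalytic f by f^2 + 1, and log g by g + 1/g, since ln t < t and
   -ln t = ln (1/t) < 1/t.  Sums and products of dominating functions
   dominate sums and products, and l f is dominated by (|l| + 1) h, so
   induction on the generation of C(X) concludes.  The only model-theoretic
   input is that subanalytic functions on a subanalytic set are closed under
   +, * and 1/_, each being obtained by composition with a definable graph. *)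

From Pilot Require Import Defs.
From HB Require Import structures.
From mathcomp Require Import all_boot all_order all_algebra.
From mathcomp Require Import all_classical all_reals all_analysis.
From mathcomp Require Import lra.
Import Order.TTheory GRing.Theory Num.Theory.
Local Open Scope classical_set_scope.
Local Open Scope ring_scope.
Set Implicit Arguments. Unset Strict Implicit.

Section Coordinates.
Variable R : realType.

Lemma ext_max n (x : 'I_n -> R) t : ext x t ord_max = t.
Proof. by rewrite /ext unlift_none. Qed.

Lemma ext_lift n (x : 'I_n -> R) t j : ext x t (lift ord_max j) = x j.
Proof. by rewrite /ext liftK. Qed.

Lemma restrict_ext n (x : 'I_n -> R) t : Defs.restrict (ext x t) = x.
Proof. by apply: funext => j; rewrite /Defs.restrict ext_lift. Qed.

Lemma ext_restrict n (w : 'I_n.+1 -> R) : ext (Defs.restrict w) (w ord_max) = w.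
Proof.
by apply: funext => i; case: (unliftP ord_max i) => [j|] ->;
  rewrite ?ext_lift ?ext_max.
Qed.

Definition ext_index m n (s : 'I_n -> 'I_m) (k : 'I_m) : 'I_n.+1 -> 'I_m :=
  fun i => if unlift ord_max i is Some j then s j else k.

Lemma ext_index_max m n (s : 'I_n -> 'I_m) k : ext_index s k ord_max = k.
Proof. by rewrite /ext_index unlift_none. Qed.

Lemma comp_ext_index m n (w : 'I_m -> R) (s : 'I_n -> 'I_m) k :
  w \o ext_index s k = ext (w \o s) (w k).
Proof.
by apply: funext => i; rewrite /comp /ext_index /ext; case: (unlift _ i).
Qed.

Definition point3 (a b c : R) : 'I_3 -> R := fun i => nth 0 [:: a; b; c] i.

Definition index3 m (i0 i1 i2 : 'I_m) : 'I_3 -> 'I_m :=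
  fun i => nth i0 [:: i0; i1; i2] i.

Lemma comp_index3 m (w : 'I_m -> R) i0 i1 i2 :
  w \o index3 i0 i1 i2 = point3 (w i0) (w i1) (w i2).
Proof. by apply: funext => -[[|[|[|]]] ?]. Qed.

End Coordinates.

Section DefinableSets.
Variable R : realType.

Lemma definable_ext n (A B : set ('I_n -> R)) :
  definable A -> (forall x, A x <-> B x) -> definable B.
Proof.
move=> dA AB; suff -> : B = A by [].
by apply: funext => x; apply: propext; split => /AB.
Qed.

Lemma definableI n (A B : set ('I_n -> R)) :
  definable A -> definable B -> definable (A `&` B).
Proof.
move=> dA dB; rewrite -[A `&` B]setCK setCI.
by apply/def_compl/def_union; apply: def_compl.
Qed.

End DefinableSets.

Section SubanalyticFunctions.
Variables (R : realType) (n : nat) (X : set ('I_n -> R)).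

Lemma subanalytic_fun_cst (c : R) :
  subanalytic X -> subanalytic_fun X (fun _ => c).
Proof.
move=> dX.
have d := definableI (def_subst (fun j : 'I_n => lift ord_max j) dX)
  (def_subst (fun _ : 'I_1 => (ord_max : 'I_n.+1)) (def_const c)).
by apply: (definable_ext d).
Qed.

Let lift3 (j : 'I_n) : 'I_n.+3 := lift ord_max (lift ord_max (lift ord_max j)).

Lemma comp_lift3 (x : 'I_n -> R) y a b : ext (ext (ext x y) a) b \o lift3 = x.
Proof. by apply: funext => j; rewrite /comp !ext_lift. Qed.

(* The graph of h is the projection onto (x, y) of the definable set of
   points (x, y, a, b) of R^(n+3) with a = g1 x, b = g2 x and (a, b, y) in B. *)
Lemma subanalytic_fun_rel g1 g2 h (B : set ('I_3 -> R)) :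
  subanalytic_fun X g1 -> subanalytic_fun X g2 -> definable B ->
  (forall x, X x -> forall y, B (point3 (g1 x) (g2 x) y) <-> y = h x) ->
  subanalytic_fun X h.
Proof.
move=> d1 d2 dB defh.
pose ia : 'I_n.+3 := lift ord_max ord_max.
pose iy : 'I_n.+3 := lift ord_max (lift ord_max ord_max).
have dS := definableI
  (definableI (def_subst (ext_index lift3 ia) d1)
              (def_subst (ext_index lift3 ord_max) d2))
  (def_subst (index3 ia ord_max iy) dB).
apply: (definable_ext (def_proj (def_proj dS))) => w /=.
rewrite -(ext_restrict w) restrict_ext ext_max.
set x := Defs.restrict w; set y := w ord_max.
have pointE a b : [/\ ext (ext (ext x y) a) b ia = a,
  ext (ext (ext x y) a) b ord_max = b & ext (ext (ext x y) a) b iy = y].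
  by rewrite /ia /iy !ext_lift !ext_max.
split=> [[a [b]] | [Xx yE]].
  case: (pointE a b) => Ea Eb Ey.
  rewrite !comp_ext_index comp_index3 comp_lift3 !ext_index_max !restrict_ext.
  rewrite Ea Eb Ey.
  by move=> [[[Xx ->] [_ ->]] /(defh x Xx)].
exists (g1 x), (g2 x); case: (pointE (g1 x) (g2 x)) => Ea Eb Ey.
rewrite !comp_ext_index comp_index3 comp_lift3 !ext_index_max !restrict_ext.
rewrite Ea Eb Ey.
by split=> //; apply/defh.
Qed.

Lemma subanalytic_funD g1 g2 :
  subanalytic_fun X g1 -> subanalytic_fun X g2 ->
  subanalytic_fun X (fun x => g1 x + g2 x).
Proof.
move=> d1 d2; apply: (subanalytic_fun_rel d1 d2 (@def_add R)) => x _ y.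
by rewrite /graph /Defs.restrict /=.
Qed.

Lemma subanalytic_funM g1 g2 :
  subanalytic_fun X g1 -> subanalytic_fun X g2 ->
  subanalytic_fun X (fun x => g1 x * g2 x).
Proof.
move=> d1 d2; apply: (subanalytic_fun_rel d1 d2 (@def_mul R)) => x _ y.
by rewrite /graph /Defs.restrict /=.
Qed.

(* y = 1 / g x is described by g x * y = 1, i.e. the graph of the product
   read at the permuted point (g x, y, 1). *)
Lemma subanalytic_funV g :
  subanalytic X -> subanalytic_fun X g -> (forall x, X x -> 0 < g x) ->
  subanalytic_fun X (fun x => (g x)^-1).
Proof.
move=> dX dg gpos.
have dB := def_subst (index3 (ord0 : 'I_3) ord_max (lift ord0 ord0)) (@def_mul R).
apply: (subanalytic_fun_rel dg (subanalytic_fun_cst 1 dX) dB) => x Xx y /=.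
rewrite comp_index3 /graph /Defs.restrict /=.
have gx0 : g x != 0 by rewrite gt_eqF ?gpos.
split=> [gy1 | ->]; last by rewrite mulfV.
by apply: (mulfI gx0); rewrite mulfV.
Qed.

End SubanalyticFunctions.

Lemma normr_le_sqr_add1 (R : realFieldType) (t : R) : `|t| <= t * t + 1.
Proof.
rewrite -expr2 -(ger0_norm (sqr_ge0 t)) normrX.
by have := normr_ge0 t; nra.
Qed.

Lemma normr_ln_lt (R : realType) (t : R) : 0 < t -> `|ln t| < t + t^-1.
Proof.
move=> t0; have ti0 : 0 < t^-1 by rewrite invr_gt0.
have := ln_sublinear t0; have := ln_sublinear ti0.
by rewrite lnV ?posrE // ltr_norml; lra.
Qed.

Section Domination.
Variables (R : realType) (n : nat) (X : set ('I_n -> R)).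
Hypothesis subX : subanalytic X.

Definition subanalytically_bounded (f : ('I_n -> R) -> R) : Prop :=
  exists h : ('I_n -> R) -> R,
    subanalytic_fun X h /\ (forall x, X x -> 0 < h x) /\
    (forall x, X x -> `|f x| <= h x).

Lemma subanalytically_bounded_fun f :
  subanalytic_fun X f -> subanalytically_bounded f.
Proof.
move=> sf; exists (fun x => f x * f x + 1); split.
  exact: subanalytic_funD (subanalytic_funM sf sf) (subanalytic_fun_cst 1 subX).
split=> x _; last exact: normr_le_sqr_add1.
by rewrite -expr2 ltr_wpDl ?sqr_ge0.
Qed.

Lemma subanalytically_bounded_ln g :
  subanalytic_fun X g -> (forall x, X x -> 0 < g x) ->
  subanalytically_bounded (fun x => ln (g x)).
Proof.
move=> sg gpos; exists (fun x => g x + (g x)^-1); split.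
  exact: subanalytic_funD sg (subanalytic_funV subX sg gpos).
split=> x Xx; have gx := gpos x Xx.
  by rewrite addr_gt0 ?invr_gt0.
exact/ltW/normr_ln_lt.
Qed.

Lemma subanalytically_boundedD f g :
  subanalytically_bounded f -> subanalytically_bounded g ->
  subanalytically_bounded (fun x => f x + g x).
Proof.
move=> [h1 [s1 [p1 b1]]] [h2 [s2 [p2 b2]]].
exists (fun x => h1 x + h2 x); split; first exact: subanalytic_funD.
split=> x Xx; first by rewrite addr_gt0 ?p1 ?p2.
exact: le_trans (ler_normD _ _) (lerD (b1 x Xx) (b2 x Xx)).
Qed.

Lemma subanalytically_boundedM f g :
  subanalytically_bounded f -> subanalytically_bounded g ->
  subanalytically_bounded (fun x => f x * g x).
Proof.
move=> [h1 [s1 [p1 b1]]] [h2 [s2 [p2 b2]]].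
exists (fun x => h1 x * h2 x); split; first exact: subanalytic_funM.
split=> x Xx; first by rewrite mulr_gt0 ?p1 ?p2.
by rewrite normrM ler_pM ?normr_ge0 ?b1 ?b2.
Qed.

Lemma subanalytically_boundedZ (l : R) f :
  subanalytically_bounded f -> subanalytically_bounded (fun x => l * f x).
Proof.
move=> [h [sh [ph bh]]].
exists (fun x => (`|l| + 1) * h x); split.
  exact: subanalytic_funM (subanalytic_fun_cst _ subX) sh.
split=> x Xx; first by rewrite mulr_gt0 ?ph ?ltr_wpDl.
by rewrite normrM ler_pM ?normr_ge0 ?bh ?lerDl.
Qed.

Lemma subanalytically_bounded_eq f g :
  subanalytically_bounded f -> (forall x, X x -> f x = g x) ->
  subanalytically_bounded g.
Proof.
move=> [h [sh [ph bh]]] fg; exists h; do 2!split=> //.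
by move=> x Xx; rewrite -fg ?bh.
Qed.

End Domination.

Theorem lemma7p1 (R : realType) (n : nat) (X : set ('I_n -> R))
    (f : ('I_n -> R) -> R) :
  subanalytic X -> inC X f ->
  exists h : ('I_n -> R) -> R,
    subanalytic_fun X h /\ (forall x, X x -> 0 < h x) /\
    (forall x, X x -> `|f x| <= h x).
Proof.
move=> subX; elim=> {f}.
- exact: subanalytically_bounded_fun.
- exact: subanalytically_bounded_ln.
- by move=> f g _ bf _ bg; exact: subanalytically_boundedD.
- by move=> f g _ bf _ bg; exact: subanalytically_boundedM.
- by move=> l f _ bf; exact: subanalytically_boundedZ.
- by move=> f g _ bf fg; exact: subanalytically_bounded_eq fg.
Qed.
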